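(* Let $(X,Y)$ be a splitting of a finite Weyl group $W$ with simple roots $\Delta$. Then: (1) $X$ has a unique maximal element $x_0$ under left weak order and $Y$ has a unique maximal element $y_0$ under right weak order, and $x_0y_0=w_0$. (2) For every $J\subseteq\Delta$, $(X\cap W_J,\,Y\cap W_J)$ is a splitting of $W_J$.
   Context: $W$ is the Weyl group of a finite crystallographic root system with simple roots $\Delta$, generated by simple reflections $s_\alpha$; $\ell$ is Coxeter length and $w_0$ is the longest element. Left weak order: $v\leq_L w$ iff $w=zv$ with $\ell(w)=\ell(z)+\ell(v)$; right weak order: $v\leq_R w$ iff $w=vz$ with $\ell(w)=\ell(v)+\ell(z)$. For $J\subseteq\Delta$, $W_J$ is the parabolic subgroup generated by $\{s_\alpha:\alpha\in J\}$, with the restricted length function. A pair $(X,Y)$ of subsets of a group $G$ (here $W$ or $W_J$) is a splitting of $G$ if the map $X\times Y\to G$, $(x,y)\mapsto xy$, is a bijection with $\ell(xy)=\ell(x)+\ell(y)$ for all $x\in X$, $y\in Y$. *)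

From HB Require Import structures.
From mathcomp Require Import all_boot all_order all_algebra.
Set Implicit Arguments. Unset Strict Implicit. Unset Printing Implicit Defensive.
Import Order.TTheory GRing.Theory Num.Theory.
Local Open Scope ring_scope.

Section WeylDefs.
Variables (R : realFieldType) (n : nat).
Local Notation vec := 'rV[R]_n.
Local Notation mx := 'M[R]_n.

Definition dot (u v : vec) : R := (u *m v^T) 0 0.

Definition reflv (a v : vec) : vec := v - (2 * dot v a / dot a a) *: a.
Definition refl_mx (a : vec) : mx := 1%:M - (2 / dot a a) *: (a^T *m a).

Definition is_root_system (Phi : seq vec) : Prop :=
  [/\ 0 \notin Phi,
      (<<Phi>>%VS = fullv),
      (forall a b, a \in Phi -> b \in Phi -> reflv a b \in Phi),
      (forall a (c : R), a \in Phi -> c *: a \in Phi -> c = 1 \/ c = -1) &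
      (forall a b, a \in Phi -> b \in Phi ->
         exists z : int, 2 * dot b a / dot a a = z%:~R)].

Definition is_simple_system (Phi Delta : seq vec) : Prop :=
  [/\ {subset Delta <= Phi},
      free Delta &
      (forall b, b \in Phi -> exists c : 'I_(size Delta) -> int,
         b = \sum_(i < size Delta) (c i)%:~R *: Delta`_i /\
         ((forall i, 0 <= c i) \/ (forall i, c i <= 0)))].

Definition prodw (w : seq vec) : mx := foldr (fun a M => refl_mx a *m M) 1%:M w.

Definition inW (J : seq vec) (g : mx) : Prop :=
  exists w : seq vec, {subset w <= J} /\ g = prodw w.

Definition coxlen (Delta : seq vec) (g : mx) (k : nat) : Prop :=
  (exists w : seq vec, [/\ {subset w <= Delta}, size w = k & g = prodw w]) /\
  (forall w : seq vec, {subset w <= Delta} -> g = prodw w -> (k <= size w)%N).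

Definition len_add (Delta : seq vec) (x y : mx) : Prop :=
  forall a b, coxlen Delta x a -> coxlen Delta y b -> coxlen Delta (x *m y) (a + b).

Definition leL (Delta : seq vec) (v w : mx) : Prop :=
  [/\ inW Delta v, inW Delta w &
      exists z, [/\ inW Delta z, w = z *m v & len_add Delta z v]].
Definition leR (Delta : seq vec) (v w : mx) : Prop :=
  [/\ inW Delta v, inW Delta w &
      exists z, [/\ inW Delta z, w = v *m z & len_add Delta v z]].

Definition longest (Delta : seq vec) (w0 : mx) : Prop :=
  inW Delta w0 /\
  forall w a b, inW Delta w -> coxlen Delta w a -> coxlen Delta w0 b -> (a <= b)%N.

Definition is_maximal (le : mx -> mx -> Prop) (X : mx -> Prop) (x : mx) : Prop :=
  X x /\ forall x', X x' -> le x x' -> x' = x.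
Definition unique_maximal (le : mx -> mx -> Prop) (X : mx -> Prop) (x : mx) : Prop :=
  is_maximal le X x /\ forall x', is_maximal le X x' -> x' = x.

(* (X, Y) is a splitting of the group G (subset of W), lengths measured in W
   (restricted length function) *)
Definition splitting (Delta : seq vec) (G X Y : mx -> Prop) : Prop :=
  [/\ (forall x, X x -> G x) /\ (forall y, Y y -> G y),
      (forall x y, X x -> Y y -> G (x *m y)),
      (forall g, G g -> exists x y, [/\ X x, Y y & g = x *m y]),
      (forall x y x' y', X x -> Y y -> X x' -> Y y' ->
         x *m y = x' *m y' -> x = x' /\ y = y') &
      (forall x y, X x -> Y y -> len_add Delta x y)].

End WeylDefs.

(* Simple coordinates split the roots into positive and negative ones, and a
   simple reflection s_a permutes the positive roots other than a.  This gives
   the deletion condition, hence l(s_a g) = l(g) - 1 exactly when a g is a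
   negative root.  W acts faithfully on the finite set of roots, so lengths are
   bounded and there is an element w0 of maximal length; it sends every positive
   root to a negative one, whence l(g w0) = l(w0) - l(g) and every g is a
   length-additive left and right factor of w0.  Writing w0 = x0 y0 in the
   splitting, additivity of l(x y0) shows x <=_L x0 for all x in X, dually
   y <=_R y0 for all y in Y, and antisymmetry of the weak orders gives
   uniqueness.  For (2), a simple root outside J keeps its coefficient under
   W_J, so a reduced word of an element of W_J only uses letters of J; the
   concatenated reduced words of x and y then put both factors in W_J. *)

From HB Require Import structures.
From mathcomp Require Import all_boot all_order all_algebra.
From Stdlib Require Import Classical.
From mathcomp Require Import ring zify.
Import Order.TTheory GRing.Theory Num.Theory.
Local Open Scope ring_scope.
Set Implicit Arguments. Unset Strict Implicit. Unset Printing Implicit Defensive.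

Lemma ex_minimal (P : nat -> Prop) :
  (exists k, P k) -> exists k, P k /\ forall j, P j -> (k <= j)%N.
Proof.
case=> k Pk; elim: k {-2}k (leqnn k) Pk => [|b IH] k kb Pk.
  by exists k; split=> // j _; move: kb; rewrite leqn0 => /eqP->.
have [[j [jk Pj]]|no_smaller] := classic (exists j, (j < k)%N /\ P j).
  by apply: (IH j) => //; rewrite -ltnS (leq_trans jk kb).
exists k; split=> // j Pj; rewrite leqNgt; apply/negP => jk.
by apply: no_smaller; exists j.
Qed.

Lemma ex_maximal (P : nat -> Prop) B : (exists k, P k) ->
  (forall k, P k -> (k <= B)%N) -> exists k, P k /\ forall j, P j -> (j <= k)%N.
Proof.
move=> [k Pk] leB.
have [d [Pd min]] : exists d, P (B - d)%N /\ forall j, P (B - j)%N -> (d <= j)%N.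
  by apply: ex_minimal; exists (B - k)%N; rewrite subKn ?leB.
exists (B - d)%N; split=> // j Pj.
have := min (B - j)%N; rewrite subKn ?leB // => /(_ Pj); have := leB j Pj; lia.
Qed.

Section Reflections.
Variables (R : realFieldType) (n : nat).
Local Notation vec := 'rV[R]_n.
Local Notation mx := 'M[R]_n.

Lemma dotE (u v : vec) : dot u v = \sum_i u 0 i * v 0 i.
Proof. by rewrite /dot !mxE; apply: eq_bigr => i _; rewrite mxE. Qed.

Lemma dotC (u v : vec) : dot u v = dot v u.
Proof. by rewrite !dotE; apply: eq_bigr => i _; rewrite mulrC. Qed.

Lemma dotBl (u v w : vec) : dot (u - v) w = dot u w - dot v w.
Proof. by rewrite /dot mulmxBl !mxE. Qed.

Lemma dotZl c (u v : vec) : dot (c *: u) v = c * dot u v.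
Proof. by rewrite /dot -scalemxAl !mxE. Qed.

Lemma dotBr (u v w : vec) : dot w (u - v) = dot w u - dot w v.
Proof. by rewrite dotC dotBl !(dotC w). Qed.

Lemma dotZr c (u v : vec) : dot v (c *: u) = c * dot v u.
Proof. by rewrite dotC dotZl dotC. Qed.

Lemma dot_self_neq0 (u : vec) : u != 0 -> dot u u != 0.
Proof.
move=> u0; rewrite dotE psumr_neq0 => [|i _]; last by rewrite -expr2 sqr_ge0.
have [i ui] : exists i, u 0 i != 0.
  apply/existsP; apply: contraR u0; rewrite negb_exists => /forallP u_eq0.
  by apply/eqP/rowP => j; rewrite mxE; apply/eqP/negPn.
apply/hasP; exists i; first by rewrite mem_index_enum.
by rewrite lt_def -expr2 sqr_ge0 andbT expf_neq0.
Qed.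

Lemma row_mulmx_ext (A B : mx) : (forall v : vec, v *m A = v *m B) -> A = B.
Proof. by move=> eqAB; apply/row_matrixP => i; rewrite !rowE eqAB. Qed.

Lemma mulmx1_invmx (A B : mx) : A *m B = 1%:M -> invmx A = B.
Proof.
move=> AB1; have [uA _] := mulmx1_unit AB1.
by rewrite -[invmx A]mulmx1 -AB1 mulmxA mulVmx ?mul1mx.
Qed.

Lemma refl_mxE (a v : vec) : v *m refl_mx a = reflv a v.
Proof.
rewrite /refl_mx /reflv mulmxBr mulmx1 -scalemxAr mulmxA.
by rewrite [v *m a^T]mx11_scalar mul_scalar_mx scalerA /dot mulrAC.
Qed.

Lemma refl_mx_root (a : vec) : a != 0 -> a *m refl_mx a = - a.
Proof.
move=> a0; rewrite refl_mxE /reflv mulfK ?dot_self_neq0 // scaler_nat mulr2n.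
by rewrite opprD addrA subrr add0r.
Qed.

Lemma refl_mxK (a : vec) : a != 0 -> refl_mx a *m refl_mx a = 1%:M.
Proof.
move=> a0; have aa0 := dot_self_neq0 a0.
apply: row_mulmx_ext => v; rewrite mulmxA !refl_mxE mulmx1 {1}/reflv /reflv.
rewrite dotBl dotZl; set t := 2 * dot v a / dot a a.
have -> : 2 * (dot v a - t * dot a a) / dot a a = - t by rewrite /t; field.
by rewrite scaleNr opprK subrK.
Qed.

Lemma refl_mx_dot (a x y : vec) : a != 0 ->
  dot (x *m refl_mx a) (y *m refl_mx a) = dot x y.
Proof.
move=> a0; have aa0 := dot_self_neq0 a0.
by rewrite !refl_mxE /reflv dotBl !dotBr !dotZl !dotZr [dot a y]dotC; field.
Qed.

Lemma refl_mxJ (a v : vec) : a != 0 -> v != 0 ->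
  refl_mx (v *m refl_mx a) = refl_mx a *m refl_mx v *m refl_mx a.
Proof.
move=> a0 v0; apply: row_mulmx_ext => u.
rewrite !mulmxA [u *m refl_mx a *m refl_mx v]refl_mxE refl_mxE /reflv.
rewrite mulmxBl -scalemxAl -mulmxA refl_mxK // mulmx1 refl_mx_dot //.
by rewrite -[in dot u _](mulmx1 u) -(refl_mxK a0) mulmxA refl_mx_dot.
Qed.

End Reflections.

Section Words.
Variables (R : realFieldType) (n : nat).
Local Notation vec := 'rV[R]_n.

Lemma prodw_cat (w1 w2 : seq vec) : prodw (w1 ++ w2) = prodw w1 *m prodw w2.
Proof. by elim: w1 => [|a w1 IH] /=; rewrite ?mul1mx // IH mulmxA. Qed.

Lemma prodw_rev_inv (w : seq vec) : 0 \notin w ->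
  prodw w *m prodw (rev w) = 1%:M.
Proof.
elim: w => [|a w IH] /=; first by rewrite mulmx1.
rewrite in_cons negb_or eq_sym => /andP[a0 w0].
rewrite rev_cons -cats1 prodw_cat /= mulmx1 -mulmxA (mulmxA (prodw w)) IH //.
by rewrite mul1mx refl_mxK.
Qed.

Lemma invmx_prodw (w : seq vec) : 0 \notin w -> invmx (prodw w) = prodw (rev w).
Proof. by move/prodw_rev_inv/mulmx1_invmx. Qed.

Lemma inW_mul (J : seq vec) g h : inW J g -> inW J h -> inW J (g *m h).
Proof.
move=> [w [wJ ->]] [u [uJ ->]]; exists (w ++ u); rewrite prodw_cat; split=> //.
by move=> x; rewrite mem_cat => /orP[/wJ|/uJ].
Qed.

End Words.

Lemma greatest_unique_maximal (R : realFieldType) (n : nat)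
    (le : 'M[R]_n -> 'M[R]_n -> Prop) (X : 'M[R]_n -> Prop) x0 :
  (forall u v, le u v -> le v u -> v = u) -> X x0 -> (forall x, X x -> le x x0) ->
  unique_maximal le X x0.
Proof.
move=> le_anti Xx0 le_x0; split; first by split=> // x Xx /le_anti; apply; apply: le_x0.
by move=> x [Xx max_x]; apply/esym/(max_x x0 Xx0)/le_x0.
Qed.

Section RootSystem.
Variables (R : realFieldType) (n : nat) (Phi Delta : seq 'rV[R]_n).
Hypothesis Phi_root : is_root_system Phi.
Hypothesis Delta_simple : is_simple_system Phi Delta.
Local Notation vec := 'rV[R]_n.
Local Notation m := (size Delta).
Local Notation crd i v := (coord (in_tuple Delta) i v).

Lemma root_neq0 a : a \in Phi -> a != 0.
Proof. by case: Phi_root => Phi0 _ _ _ _; apply: contraTneq => ->. Qed.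

Lemma simple_root : {subset Delta <= Phi}.
Proof. by case: Delta_simple. Qed.

Lemma simple_neq0 a : a \in Delta -> a != 0.
Proof. by move/simple_root/root_neq0. Qed.

Lemma simple_word_neq0 (w : seq vec) : {subset w <= Delta} -> 0 \notin w.
Proof. by move=> wD; apply/negP => /wD /simple_neq0; rewrite eqxx. Qed.

Lemma root_refl a b : a \in Phi -> b \in Phi -> b *m refl_mx a \in Phi.
Proof. by case: Phi_root => _ _ reflPhi _ _ aP bP; rewrite refl_mxE reflPhi. Qed.

Lemma coord_simple (i j : 'I_m) : crd j Delta`_i = (i == j)%:R.
Proof. by case: Delta_simple => _ freeD _; apply: coord_free. Qed.

Lemma simple_index a : a \in Delta -> {k : 'I_m | a = Delta`_k}.
Proof.
by move=> aD; exists (Ordinal (etrans (index_mem a Delta) aD)); rewrite /= nth_index.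
Qed.

Definition is_pos (v : vec) := forall i : 'I_m, 0 <= crd i v.
Definition is_neg (v : vec) := forall i : 'I_m, crd i v <= 0.

Lemma root_coordE b : b \in Phi -> b = \sum_(i < m) crd i b *: Delta`_i.
Proof.
case: Delta_simple => _ freeD rootD /rootD[c [-> _]].
by apply: eq_bigr => i _; rewrite (coord_sum_free (fun i => (c i)%:~R)).
Qed.

Lemma root_pos_or_neg b : b \in Phi -> is_pos b \/ is_neg b.
Proof.
case: Delta_simple => _ freeD rootD /rootD[c [-> c_sign]].
have crdE j : crd j (\sum_(i < m) (c i)%:~R *: Delta`_i) = (c j)%:~R.
  exact: (coord_sum_free (fun i => (c i)%:~R)).
by case: c_sign => c_sign; [left|right] => i; rewrite crdE ?ler0z ?lerz0.
Qed.

Lemma root_not_pos_neg b : b \in Phi -> is_pos b -> is_neg b -> False.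
Proof.
move=> bP pos_b neg_b; have := root_neq0 bP.
rewrite (root_coordE bP) big1 ?eqxx // => i _.
have /eqP-> : crd i b == 0 by rewrite eq_le pos_b neg_b.
by rewrite scale0r.
Qed.

Lemma simple_pos a : a \in Delta -> is_pos a.
Proof. by case/simple_index => k -> i; rewrite coord_simple ler0n. Qed.

Lemma is_negN v : is_pos v -> is_neg (- v).
Proof. by move=> pos_v i; rewrite linearN oppr_le0 pos_v. Qed.

Lemma coord_refl_simple (i k : 'I_m) v : i != k ->
  crd i (v *m refl_mx Delta`_k) = crd i v.
Proof.
move=> ik; rewrite refl_mxE /reflv linearB linearZ /= coord_simple.
by rewrite eq_sym (negPf ik) mulr0 subr0.
Qed.

Lemma refl_simple_pos a b : a \in Delta -> b \in Phi -> is_pos b -> b != a ->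
  is_pos (b *m refl_mx a).
Proof.
move=> aD bP pos_b b_neq_a; have [k ak] := simple_index aD.
have [j /andP[jk bj_gt0]] : exists j, (j != k) && (0 < crd j b).
  apply/existsP; apply: contraR b_neq_a; rewrite negb_exists => /forallP b_supp.
  (* otherwise b is a positive multiple of a, hence a since Phi is reduced *)
  have b_eq : b = crd k b *: a.
    rewrite {1}(root_coordE bP) (bigD1 k) //= big1 ?addr0 -?ak // => i ik.
    have /eqP-> : crd i b == 0.
      by rewrite eq_le pos_b andbT leNgt; move: (b_supp i); rewrite ik.
    by rewrite scale0r.
  case: Phi_root => _ _ _ Phi_reduced _.
  have : crd k b *: a \in Phi by rewrite -b_eq.
  case/(Phi_reduced a _ (simple_root aD)) => [b1|bN1].
    by rewrite b_eq b1 scale1r.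
  by move: (pos_b k); rewrite bN1 oppr_ge0 ler10.
have [//|neg_bs] := root_pos_or_neg (root_refl (simple_root aD) bP).
by move: (neg_bs j); rewrite ak coord_refl_simple // leNgt bj_gt0.
Qed.

Lemma prodw_root (w : seq vec) b : {subset w <= Delta} -> b \in Phi ->
  b *m prodw w \in Phi.
Proof.
elim: w b => [|a w IH] b wD bP /=; first by rewrite mulmx1.
rewrite mulmxA; apply: IH => [x xw|]; first by apply: wD; rewrite inE xw orbT.
by apply: root_refl => //; apply/simple_root/wD; rewrite mem_head.
Qed.

Definition del_at (i : nat) (w : seq vec) := take i w ++ drop i.+1 w.

Lemma size_del_at i (w : seq vec) : (i < size w)%N -> size (del_at i w) = (size w).-1.
Proof. by move=> iw; rewrite /del_at size_cat size_take size_drop iw; lia. Qed.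

Lemma mem_del_at i (w : seq vec) : {subset del_at i w <= w}.
Proof. by move=> x; rewrite mem_cat => /orP[/mem_take|/mem_drop]. Qed.

Lemma refl_mx_prodw_del (w : seq vec) v : {subset w <= Delta} ->
  v \in Phi -> is_pos v -> is_neg (v *m prodw w) ->
  exists2 i, (i < size w)%N & refl_mx v *m prodw w = prodw (del_at i w).
Proof.
elim: w v => [|a w IH] v wD vP pos_v /=.
  by rewrite mulmx1 => neg_v; case: (root_not_pos_neg vP pos_v neg_v).
have aD : a \in Delta by apply: wD; rewrite mem_head.
have w_D : {subset w <= Delta} by move=> x xw; apply: wD; rewrite inE xw orbT.
move=> neg_vw; have [->|v_neq_a] := eqVneq v a.
  by exists 0%N; rewrite // mulmxA refl_mxK ?simple_neq0 // mul1mx /del_at drop1.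
have vaP := root_refl (simple_root aD) vP.
rewrite mulmxA in neg_vw.
have [i iw e] := IH _ w_D vaP (refl_simple_pos aD vP pos_v v_neq_a) neg_vw.
exists i.+1 => //; rewrite /del_at /= prodw_cat -prodw_cat -/(del_at i w) -e.
have a_neq0 := simple_neq0 aD.
by rewrite (refl_mxJ a_neq0 (root_neq0 vP)) !mulmxA refl_mxK ?mul1mx.
Qed.

Local Notation W := (inW Delta).
Local Notation len := (coxlen Delta).

Definition reduced (w : seq vec) := {subset w <= Delta} /\ len (prodw w) (size w).

Lemma coxlen_uniq g k k' : len g k -> len g k' -> k = k'.
Proof.
case=> [[w [wD <- ->]] min] [[w' [w'D <- e]] min'].
by apply/eqP; rewrite eqn_leq min // min'.
Qed.

Lemma coxlen_inW g k : len g k -> W g.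
Proof. by case=> [[w [wD _ ->]] _]; exists w. Qed.

Lemma coxlen_exists g : W g -> exists k, len g k.
Proof.
case=> w [wD gE].
have [k [[v [vD vk gv]] min]] := ex_minimal
  (ex_intro (fun k => exists v, [/\ {subset v <= Delta}, size v = k & g = prodw v])
     (size w) (ex_intro _ w (And3 wD erefl gE))).
exists k; split; first by exists v.
by move=> u uD gu; apply: min; exists u.
Qed.

Lemma coxlen_reduced g k : len g k -> exists2 w, reduced w & size w = k /\ g = prodw w.
Proof.
move=> lg; case: (lg) => [[w [wD wk gw]] _].
by exists w => //; split; rewrite // wk -gw.
Qed.

Lemma coxlen0_eq1 g : len g 0 -> g = 1%:M.
Proof. by case=> [[w [_ /size0nil -> ->]] _]. Qed.

Lemma coxlen1 : len 1%:M 0.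
Proof. by split=> //; exists [::]. Qed.

Lemma reduced_cat u v : reduced (u ++ v) -> reduced u /\ reduced v.
Proof.
move=> [uvD [_ min]].
have uD : {subset u <= Delta} by move=> x xu; apply: uvD; rewrite mem_cat xu.
have vD : {subset v <= Delta} by move=> x xv; apply: uvD; rewrite mem_cat xv orbT.
have catD t t' :
    {subset t <= Delta} -> {subset t' <= Delta} -> {subset t ++ t' <= Delta}.
  by move=> tD t'D x; rewrite mem_cat => /orP[/tD|/t'D].
split; split=> //; split; [by exists u | | by exists v |] => t tD e.
  rewrite -(leq_add2r (size v)) -!size_cat; apply: min; first exact: catD.
  by rewrite !prodw_cat e.
rewrite -(leq_add2l (size u)) -!size_cat; apply: min; first exact: catD.
by rewrite !prodw_cat e.
Qed.

Lemma inW_refl (J : seq vec) a : a \in J -> inW J (refl_mx a).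
Proof.
by move=> aJ; exists [:: a]; rewrite /= mulmx1; split=> // x; rewrite inE => /eqP->.
Qed.

Lemma coxlen_descent a g k : a \in Delta -> len g k -> is_neg (a *m g) ->
  (0 < k)%N /\ len (refl_mx a *m g) k.-1.
Proof.
move=> aD [[w [wD wk gw]] min] neg_ag.
rewrite gw in neg_ag.
have [i iw e] := refl_mx_prodw_del wD (simple_root aD) (simple_pos aD) neg_ag.
split; first by rewrite -wk (leq_ltn_trans (leq0n i) iw).
split.
  exists (del_at i w); split; first by move=> x /mem_del_at /wD.
    by rewrite size_del_at // wk.
  by rewrite gw e.
move=> u uD gu; suff : (k <= size (a :: u))%N by rewrite /=; lia.
apply: min; first by move=> x; rewrite inE => /orP[/eqP->|/uD].
by rewrite /= -gu mulmxA refl_mxK ?simple_neq0 ?mul1mx.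
Qed.

Lemma coxlen_ascent a g k : a \in Delta -> len g k -> is_pos (a *m g) ->
  len (refl_mx a *m g) k.+1.
Proof.
move=> aD lg pos_ag; have a_neq0 := simple_neq0 aD.
have [k' lag] := coxlen_exists (inW_mul (inW_refl aD) (coxlen_inW lg)).
have neg_a_ag : is_neg (a *m (refl_mx a *m g)).
  by rewrite mulmxA refl_mx_root // mulNmx; apply: is_negN.
have [k'_gt0 lg'] := coxlen_descent aD lag neg_a_ag.
rewrite mulmxA refl_mxK // mul1mx in lg'.
by rewrite (coxlen_uniq lg lg') prednK.
Qed.

Lemma reduced_cons_pos a w : reduced (a :: w) -> is_pos (a *m prodw w).
Proof.
move=> red_aw.
have [[/(_ a (mem_head _ _)) aD _] [wD lw]] := reduced_cat (u := [:: a]) red_aw.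
have [//|neg_aw] := root_pos_or_neg (prodw_root wD (simple_root aD)).
have [_ /(coxlen_uniq red_aw.2)] := coxlen_descent aD lw neg_aw.
by rewrite /=; lia.
Qed.

Lemma inW_unitmx g : W g -> g \in unitmx.
Proof.
by case=> w [wD ->]; case: (mulmx1_unit (prodw_rev_inv (simple_word_neq0 wD))).
Qed.

Lemma inW_invmx g : W g -> W (invmx g).
Proof.
case=> w [wD ->]; exists (rev w); rewrite invmx_prodw ?simple_word_neq0 //.
by split=> // x; rewrite mem_rev => /wD.
Qed.

Lemma coxlen_invmx g k : len g k -> len (invmx g) k.
Proof.
move=> lg; have [w [wD lw] [wk ->]] := coxlen_reduced lg.
have revD : {subset rev w <= Delta} by move=> x; rewrite mem_rev => /wD.
rewrite invmx_prodw ?simple_word_neq0 //; split.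
  by exists (rev w); rewrite size_rev.
move=> u uD e; rewrite -wk -(size_rev u); apply: lw.2.
  by move=> x; rewrite mem_rev => /uD.
by have := congr1 invmx e; rewrite !invmx_prodw ?simple_word_neq0 // revK.
Qed.

Lemma parabolic_pos (J : seq vec) a g : {subset J <= Delta} ->
  a \in Delta -> a \notin J -> inW J g -> is_pos (a *m g).
Proof.
move=> JD aD aJ [w [wJ ->]]; have [k ak] := simple_index aD.
have crd_k v : crd k (v *m prodw w) = crd k v.
  elim: w wJ v => [|b w IH] bwJ v /=; first by rewrite mulmx1.
  have wJ : {subset w <= J} by move=> x xw; apply: bwJ; rewrite inE xw orbT.
  have bJ : b \in J by apply: bwJ; rewrite mem_head.
  have [j bj] := simple_index (JD _ bJ).
  rewrite mulmxA (IH wJ) bj coord_refl_simple //.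
  by apply: contraNneq aJ => kj; rewrite ak kj -bj.
have wD : {subset w <= Delta} by move=> x /wJ /JD.
have [//|neg_aw] := root_pos_or_neg (prodw_root wD (simple_root aD)).
by move: (neg_aw k); rewrite crd_k ak coord_simple eqxx ler10.
Qed.

Lemma reduced_parabolic (J : seq vec) w : {subset J <= Delta} ->
  reduced w -> inW J (prodw w) -> {subset w <= J}.
Proof.
move=> JD; elim: w => [|a w IH] // red_aw awJ.
have [[/(_ a (mem_head _ _)) aD _] red_w] := reduced_cat (u := [:: a]) red_aw.
have aJ : a \in J.
  apply: contraT => aJ; have pos_a := parabolic_pos JD aD aJ awJ.
  exfalso; apply: (root_not_pos_neg _ pos_a).
    exact: prodw_root red_aw.1 (simple_root aD).
  rewrite /= mulmxA refl_mx_root ?simple_neq0 // mulNmx.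
  exact/is_negN/reduced_cons_pos.
have wJ : inW J (prodw w).
  rewrite -[prodw w]mul1mx -(refl_mxK (simple_neq0 aD)) -mulmxA.
  by apply: inW_mul => //; apply: inW_refl.
by move=> x; rewrite inE => /orP[/eqP->|/(IH red_w wJ)].
Qed.

Lemma inW_root g b : W g -> b \in Phi -> b *m g \in Phi.
Proof. by case=> w [wD ->]; apply: prodw_root. Qed.

Lemma eq_mx_on_roots (g1 g2 : 'M[R]_n) :
  (forall b, b \in Phi -> b *m g1 = b *m g2) -> g1 = g2.
Proof.
move=> eq_g; apply: row_mulmx_ext => v.
have vPhi : v \in <<in_tuple Phi>>%VS by case: Phi_root => _ -> _ _ _; rewrite memvf.
rewrite (coord_span vPhi) !mulmx_suml; apply: eq_bigr => i _.
by rewrite -!scalemxAl eq_g // mem_nth.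
Qed.

(* Roots are recorded by their index in Phi; the extra value of the codomain is
   only a junk value, never reached when g is in W. *)
Definition root_action (g : 'M[R]_n) : {ffun 'I_(size Phi) -> 'I_(size Phi).+1} :=
  [ffun i : 'I_(size Phi) => inord (index (Phi`_i *m g) Phi)].

Lemma root_action_inj g1 g2 : W g1 -> W g2 -> root_action g1 = root_action g2 -> g1 = g2.
Proof.
move=> g1W g2W /ffunP eq_perm; apply: eq_mx_on_roots => b bP.
have bi : (index b Phi < size Phi)%N by rewrite index_mem.
have := eq_perm (Ordinal bi); rewrite !ffunE /= nth_index // => /(congr1 val).
rewrite /= !inordK ?ltnS ?index_size // => eq_index.
by rewrite -(nth_index 0 (inW_root g1W bP)) eq_index nth_index ?inW_root.
Qed.

Lemma coxlen_bounded : exists B, forall g k, len g k -> (k <= B)%N.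
Proof.
exists #|{ffun 'I_(size Phi) -> 'I_(size Phi).+1}| => g k lg.
have [w red_w [wk _]] := coxlen_reduced lg.
have red_take i : reduced (take i w).
  by have := @reduced_cat (take i w) (drop i w); rewrite cat_take_drop => /(_ red_w)[].
pose f (i : 'I_k.+1) := root_action (prodw (take i w)).
have f_inj : injective f.
  move=> i j /root_action_inj eq_ij; apply/val_inj.
  have [/coxlen_inW Wi /coxlen_inW Wj] := ((red_take i).2, (red_take j).2).
  have := coxlen_uniq (red_take i).2; rewrite eq_ij // => /(_ _ (red_take j).2).
  by rewrite !size_takel // wk -ltnS.
by have := leq_card _ f_inj; rewrite card_ord => /ltnW.
Qed.

Lemma longest_exists : exists w0 K, len w0 K /\ forall g k, len g k -> (k <= K)%N.
Proof.
have [B leB] := coxlen_bounded.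
have [K [[w0 lw0] maxK]] :
    exists K, (exists g, len g K) /\ forall j, (exists g, len g j) -> (j <= K)%N.
  apply: (ex_maximal (B := B)); first by exists 0%N, 1%:M; apply: coxlen1.
  by move=> k [g /leB].
by exists w0, K; split=> // g k lg; apply: maxK; exists g.
Qed.

Section Longest.
Variables (w0 : 'M[R]_n) (K : nat).
Hypothesis len_w0 : len w0 K.
Hypothesis len_le : forall g k, len g k -> (k <= K)%N.

Lemma longest_simple_neg a : a \in Delta -> is_neg (a *m w0).
Proof.
move=> aD; have := root_pos_or_neg (inW_root (coxlen_inW len_w0) (simple_root aD)).
by case=> // /(coxlen_ascent aD len_w0) /len_le; rewrite ltnn.
Qed.

Lemma longest_pos_neg b : b \in Phi -> is_pos b -> is_neg (b *m w0).
Proof.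
move=> bP pos_b i; rewrite (root_coordE bP) mulmx_suml linear_sum /=.
apply: sumr_le0 => j _; rewrite -scalemxAl linearZ /=.
by apply: mulr_ge0_le0; [apply: pos_b | apply: longest_simple_neg; rewrite mem_nth].
Qed.

Lemma reduced_mul_longest w : reduced w -> len (prodw w *m w0) (K - size w).
Proof.
elim: w => [|a w IH] red_aw /=; first by rewrite mul1mx subn0.
have [[/(_ a (mem_head _ _)) aD _] red_w] := reduced_cat (u := [:: a]) red_aw.
have := longest_pos_neg (prodw_root red_w.1 (simple_root aD)) (reduced_cons_pos red_aw).
rewrite -mulmxA => /(coxlen_descent aD (IH red_w))[_].
by rewrite mulmxA subnS.
Qed.

Lemma coxlen_mul_longest g k : len g k -> len (g *m w0) (K - k).
Proof. by case/coxlen_reduced=> w red_w [<- ->]; apply: reduced_mul_longest. Qed.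

Lemma longest_involutive : w0 *m w0 = 1%:M.
Proof. by apply: coxlen0_eq1; rewrite -(subnn K); apply: coxlen_mul_longest. Qed.

Lemma longest_left_factor g k : len g k ->
  exists z, [/\ W z, z *m g = w0 & len z (K - k)].
Proof.
move=> lg; have gW := coxlen_inW lg; have gU := inW_unitmx gW.
exists (w0 *m invmx g); split.
- exact: inW_mul (coxlen_inW len_w0) (inW_invmx gW).
- by rewrite mulmxKV.
have -> : w0 *m invmx g = invmx (g *m w0).
  apply/esym/mulmx1_invmx.
  by rewrite mulmxA -(mulmxA g) longest_involutive mulmx1 mulmxV.
exact/coxlen_invmx/coxlen_mul_longest.
Qed.

Lemma longest_right_factor g k : len g k ->
  exists z, [/\ W z, g *m z = w0 & len z (K - k)].
Proof.
move=> lg; have gW := coxlen_inW lg.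
exists (invmx g *m w0); split.
- exact: inW_mul (inW_invmx gW) (coxlen_inW len_w0).
- by rewrite mulmxA mulmxV ?mul1mx ?inW_unitmx.
exact/coxlen_mul_longest/coxlen_invmx.
Qed.

Lemma longest_unique w : longest Delta w -> w = w0.
Proof.
case=> wW max_w; have [l lw] := coxlen_exists wW.
have lK : l = K.
  by apply/eqP; rewrite eqn_leq (len_le lw) (max_w w0 K l (coxlen_inW len_w0)).
have [z [_ <- lz]] := longest_left_factor lw.
by rewrite lK subnn in lz; rewrite (coxlen0_eq1 lz) mul1mx.
Qed.

End Longest.

Lemma leL_anti v w : leL Delta v w -> leL Delta w v -> w = v.
Proof.
move=> [vW wW [z [zW wE add_zv]]] [_ _ [z' [z'W vE add_z'w]]].
have [[a la] [b lb]] := (coxlen_exists vW, coxlen_exists wW).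
have [[c lc] [d ld]] := (coxlen_exists zW, coxlen_exists z'W).
have := coxlen_uniq (add_zv _ _ lc la); rewrite -wE => /(_ _ lb) cab.
have := coxlen_uniq (add_z'w _ _ ld lb); rewrite -vE => /(_ _ la) dba.
have c0 : c = 0%N by lia.
by rewrite c0 in lc; rewrite wE (coxlen0_eq1 lc) mul1mx.
Qed.

Lemma leR_anti v w : leR Delta v w -> leR Delta w v -> w = v.
Proof.
move=> [vW wW [z [zW wE add_vz]]] [_ _ [z' [z'W vE add_wz']]].
have [[a la] [b lb]] := (coxlen_exists vW, coxlen_exists wW).
have [[c lc] [d ld]] := (coxlen_exists zW, coxlen_exists z'W).
have := coxlen_uniq (add_vz _ _ la lc); rewrite -wE => /(_ _ lb) acb.
have := coxlen_uniq (add_wz' _ _ lb ld); rewrite -vE => /(_ _ la) bda.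
have c0 : c = 0%N by lia.
by rewrite c0 in lc; rewrite wE (coxlen0_eq1 lc) mulmx1.
Qed.

Section Splitting.
Variables (X Y : 'M[R]_n -> Prop).
Hypothesis XY_split : splitting Delta W X Y.

Lemma splitting_parabolic (J : seq vec) : {subset J <= Delta} ->
  splitting Delta (inW J) (fun g => X g /\ inW J g) (fun g => Y g /\ inW J g).
Proof.
case: XY_split => [[XW YW] _ XY_surj XY_inj add_XY] JD.
have JW g : inW J g -> W g by case=> w [wJ ->]; exists w; split=> // x /wJ /JD.
split.
- by split=> g [].
- by move=> x y [_ xJ] [_ yJ]; apply: inW_mul.
- move=> g gJ; have [x [y [Xx Yy gE]]] := XY_surj g (JW g gJ).
  have [[a la] [b lb]] := (coxlen_exists (XW x Xx), coxlen_exists (YW y Yy)).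
  have [u [uD _] [ua xE]] := coxlen_reduced la.
  have [v [vD _] [vb yE]] := coxlen_reduced lb.
  have red_uv : reduced (u ++ v).
    split; first by move=> t; rewrite mem_cat => /orP[/uD|/vD].
    by rewrite prodw_cat size_cat -xE -yE ua vb; apply: add_XY.
  have uvJ : {subset u ++ v <= J}.
    by apply: reduced_parabolic JD red_uv _; rewrite prodw_cat -xE -yE -gE.
  exists x, y; split=> //; split=> //.
    by exists u; split=> // t tu; apply: uvJ; rewrite mem_cat tu.
  by exists v; split=> // t tv; apply: uvJ; rewrite mem_cat tv orbT.
- by move=> x y x' y' [Xx _] [Yy _] [Xx' _] [Yy' _]; apply: XY_inj.
- by move=> x y [Xx _] [Yy _]; apply: add_XY.
Qed.

Section Factorization.
Variables (w0 : 'M[R]_n) (K : nat) (x0 y0 : 'M[R]_n).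
Hypothesis len_w0 : len w0 K.
Hypothesis len_le : forall g k, len g k -> (k <= K)%N.
Hypotheses (Xx0 : X x0) (Yy0 : Y y0) (w0E : w0 = x0 *m y0).

Lemma splitting_leL_greatest x : X x -> leL Delta x x0.
Proof.
case: XY_split => [[XW YW] _ _ _ add_XY] Xx.
have y0U := inW_unitmx (YW _ Yy0).
have [[l lx] [a la]] := (coxlen_exists (XW _ Xx), coxlen_exists (XW _ Xx0)).
have [b lb] := coxlen_exists (YW _ Yy0).
have K_ab : K = (a + b)%N by apply: coxlen_uniq len_w0 _; rewrite w0E; apply: add_XY.
have lxy := add_XY x y0 Xx Yy0 _ _ lx lb.
have [z [zW zxy lz]] := longest_left_factor len_w0 len_le lxy.
have zx : z *m x = x0 by apply: (can_inj (mulmxK y0U)); rewrite -mulmxA zxy w0E.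
split; [exact: XW | exact: XW | exists z; split=> // c d lc ld].
have -> : (c + d = a)%N.
  by rewrite (coxlen_uniq lc lz) (coxlen_uniq ld lx); have := len_le lxy; lia.
by rewrite zx.
Qed.

Lemma splitting_leR_greatest y : Y y -> leR Delta y y0.
Proof.
case: XY_split => [[XW YW] _ _ _ add_XY] Yy.
have x0U := inW_unitmx (XW _ Xx0).
have [[l ly] [b lb]] := (coxlen_exists (YW _ Yy), coxlen_exists (YW _ Yy0)).
have [a la] := coxlen_exists (XW _ Xx0).
have K_ab : K = (a + b)%N by apply: coxlen_uniq len_w0 _; rewrite w0E; apply: add_XY.
have lxy := add_XY x0 y Xx0 Yy _ _ la ly.
have [z [zW xyz lz]] := longest_right_factor len_w0 len_le lxy.
have yz : y *m z = y0 by apply: (can_inj (mulKmx x0U)); rewrite mulmxA xyz w0E.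
split; [exact: YW | exact: YW | exists z; split=> // c d lc ld].
have -> : (c + d = b)%N.
  by rewrite (coxlen_uniq lc ly) (coxlen_uniq ld lz); have := len_le lxy; lia.
by rewrite yz.
Qed.

End Factorization.
End Splitting.
End RootSystem.


Theorem proposition6p1 (R : realFieldType) (n : nat) (Phi Delta : seq 'rV[R]_n)
  (X Y : 'M[R]_n -> Prop) :
  is_root_system Phi -> is_simple_system Phi Delta ->
  splitting Delta (inW Delta) X Y ->
  (exists x0 y0 : 'M[R]_n,
     [/\ unique_maximal (leL Delta) X x0,
         unique_maximal (leR Delta) Y y0 &
         (forall w0, longest Delta w0 -> x0 *m y0 = w0)]) /\
  (forall J : seq 'rV[R]_n, {subset J <= Delta} ->
     splitting Delta (inW J) (fun g => X g /\ inW J g) (fun g => Y g /\ inW J g)).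
Proof.
move=> Phi_root Delta_simple XY_split.
split; last exact: (splitting_parabolic Phi_root Delta_simple XY_split).
have [w0 [K [len_w0 len_le]]] := longest_exists Phi_root Delta_simple.
have [_ _ XY_surj _ _] := XY_split.
have [x0 [y0 [Xx0 Yy0 w0E]]] := XY_surj w0 (coxlen_inW len_w0).
exists x0, y0; split.
- apply: (greatest_unique_maximal (@leL_anti _ _ Delta) Xx0).
  exact: (splitting_leL_greatest Phi_root Delta_simple XY_split len_w0 len_le Xx0 Yy0 w0E).
- apply: (greatest_unique_maximal (@leR_anti _ _ Delta) Yy0).
  exact: (splitting_leR_greatest Phi_root Delta_simple XY_split len_w0 len_le Xx0 Yy0 w0E).
- by move=> w /(longest_unique Phi_root Delta_simple len_w0 len_le) ->.
Qed.
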